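(* Let $\overrightarrow{W}$ be a Morse sequence on a simplicial complex $K$. Then for every $p$, $\widehat{\partial}_p\circ\widehat{\partial}_{p+1}=0$ and $\widehat{\delta}_{p+1}\circ\widehat{\delta}_p=0$.
   Context: A simplicial complex $K$ is a finite collection of non-empty finite sets closed under taking non-empty subsets; $\dim\sigma=|\sigma|-1$, $K^{(p)}$ the set of $p$-simplices. A pair $(\sigma,\tau)$ with $\sigma\subsetneq\tau$ is a free pair for $K$ if $\tau$ is the only simplex other than $\sigma$ containing $\sigma$; $K$ is then an elementary expansion of $K\setminus\{\sigma,\tau\}$. If $\nu$ is a facet (maximal simplex) of $K$, $K$ is an elementary filling of $K\setminus\{\nu\}$. A Morse sequence on $K$ is a sequence $\langle\emptyset=K_0,\dots,K_k=K\rangle$ with each $K_i$ an elementary expansion or filling of $K_{i-1}$; simplices added by fillings are critical; for an expansion $K_i=K_{i-1}\cup\{\sigma,\tau\}$, $\sigma\subset\tau$, $(\sigma,\tau)$ is a regular pair, $\sigma$ lower regular, $\tau$ upper regular. $\widehat W$ is the set of critical simplices. $K[p]$ is the $\mathbb{Z}_2$-vector space of subsets of $K^{(p)}$ (sum = symmetric difference, $0=\emptyset$), $\widehat W[p]=\{c\in K[p]:c\subseteq\widehat W\}$. For $\sigma\in K^{(p)}$, $\partial(\sigma)=\{\tau\in K^{(p-1)}:\tau\subset\sigma\}$, $\delta(\sigma)=\{\tau\in K^{(p+1)}:\sigma\subset\tau\}$, with linear extensions $\partial_p,\delta_p$. The reference map $\curlywedge$ is the unique map assigning to each $p$-simplex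 an element of $\widehat W[p]$, extended linearly, with $\curlywedge(\nu)=\{\nu\}$ for critical $\nu$ and $\curlywedge(\tau)=0=\curlywedge(\partial(\tau))$ for upper regular $\tau$; the coreference map $\curlyvee$ is the unique such map with $\curlyvee(\nu)=\{\nu\}$ for critical $\nu$ and $\curlyvee(\sigma)=0=\curlyvee(\delta(\sigma))$ for lower regular $\sigma$. The linear maps $\widehat\partial_p:\widehat W[p]\to\widehat W[p-1]$ and $\widehat\delta_p:\widehat W[p]\to\widehat W[p+1]$ are $\widehat\partial_p(c)=\curlywedge(\partial_p(c))$, $\widehat\delta_p(c)=\curlyvee(\delta_p(c))$. *)

From mathcomp Require Import all_boot.
Set Implicit Arguments. Unset Strict Implicit. Unset Printing Implicit Defensive.

Section Defs.
Variable V : finType.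
Notation simplex := {set V}.
Notation cplx := {set {set V}}.

Definition complex (K : cplx) : Prop :=
  set0 \notin K /\
  (forall s t : simplex, s \in K -> t \subset s -> t != set0 -> t \in K).

Definition free_pair (K : cplx) (sigma tau : simplex) : Prop :=
  [/\ sigma \proper tau, sigma \in K, tau \in K &
      forall u, u \in K -> sigma \subset u -> u = sigma \/ u = tau].

Definition facet (K : cplx) (nu : simplex) : Prop :=
  nu \in K /\ forall u, u \in K -> ~~ (nu \proper u).

Definition elem_expansion (Kprev Knext : cplx) (sigma tau : simplex) : Prop :=
  free_pair Knext sigma tau /\ Kprev = Knext :\: [set sigma; tau].

Definition elem_filling (Kprev Knext : cplx) (nu : simplex) : Prop :=
  facet Knext nu /\ Kprev = Knext :\ nu.

Definition morse_seq (K : cplx) (W : seq cplx) : Prop :=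
  [/\ 0 < size W, nth set0 W 0 = set0, last set0 W = K,
      (forall i, i < size W -> complex (nth set0 W i)) &
      (forall i, 0 < i < size W ->
         (exists sigma tau, elem_expansion (nth set0 W i.-1) (nth set0 W i) sigma tau)
         \/ (exists nu, elem_filling (nth set0 W i.-1) (nth set0 W i) nu))].

Definition critical (W : seq cplx) (nu : simplex) : Prop :=
  exists i, 0 < i < size W /\ elem_filling (nth set0 W i.-1) (nth set0 W i) nu.

Definition regular_pair (W : seq cplx) (sigma tau : simplex) : Prop :=
  exists i, 0 < i < size W /\ elem_expansion (nth set0 W i.-1) (nth set0 W i) sigma tau.

Definition upper_regular (W : seq cplx) (tau : simplex) : Prop :=
  exists sigma, regular_pair W sigma tau.

Definition lower_regular (W : seq cplx) (sigma : simplex) : Prop :=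
  exists tau, regular_pair W sigma tau.

(* Z_2-linear extension of f : simplex -> chain to chains: the sum (symmetric
   difference) of the f s, s in c; x lies in it iff it lies in an odd number
   of the f s. *)
Definition lin (f : simplex -> cplx) (c : cplx) : cplx :=
  [set x | odd #|[set s in c | x \in f s]|].

Definition bdry (K : cplx) (s : simplex) : cplx :=
  [set t in K | (t \proper s) && (#|t| == #|s|.-1)].
Definition cobdry (K : cplx) (s : simplex) : cplx :=
  [set t in K | (s \proper t) && (#|t| == #|s|.+1)].

Definition hatW (K : cplx) (W : seq cplx) (p : nat) (c : cplx) : Prop :=
  forall x, x \in c -> [/\ x \in K, #|x| = p.+1 & critical W x].

Definition is_reference_map (K : cplx) (W : seq cplx) (r : simplex -> cplx) : Prop :=
  [/\ (forall s, s \in K -> forall x, x \in r s -> [/\ x \in K, #|x| = #|s| & critical W x]),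
      (forall nu, critical W nu -> r nu = [set nu]) &
      (forall tau, upper_regular W tau -> r tau = set0 /\ lin r (bdry K tau) = set0)].

Definition is_coreference_map (K : cplx) (W : seq cplx) (r : simplex -> cplx) : Prop :=
  [/\ (forall s, s \in K -> forall x, x \in r s -> [/\ x \in K, #|x| = #|s| & critical W x]),
      (forall nu, critical W nu -> r nu = [set nu]) &
      (forall sigma, lower_regular W sigma -> r sigma = set0 /\ lin r (cobdry K sigma) = set0)].

Definition hat_bdry (K : cplx) (ref : simplex -> cplx) (c : cplx) : cplx :=
  lin ref (lin (bdry K) c).
Definition hat_cobdry (K : cplx) (coref : simplex -> cplx) (c : cplx) : cplx :=
  lin coref (lin (cobdry K) c).

End Defs.

From mathcomp Require Import all_boot zify.
Set Implicit Arguments. Unset Strict Implicit. Unset Printing Implicit Defensive.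

(* The key identity is ref (d (ref s)) = ref (d s) for every simplex s, proved
   along the Morse sequence: it is immediate for critical s, both sides vanish
   for an upper regular tau, and for the lower regular sigma of a pair
   (sigma, tau) the relations ref (d tau) = 0 and d (d tau) = 0 give, over Z_2,
   ref sigma = ref (d tau - sigma) and d sigma = d (d tau - sigma), so the
   identity reduces to the faces of tau other than sigma, which appear earlier.
   Then hat d (hat d c) = ref (d (ref (d c))) = ref (d (d c)) = 0.  The
   coboundary case is dual: the sequence is traversed backwards and the
   cofaces of sigma other than tau appear later. *)

Lemma odd_card (T : finType) (P : pred T) :
  odd #|[set a | P a]| = \big[addb/false]_a P a.
Proof.
rewrite -sum1_card big_mkcond /= (big_morph odd oddD (erefl (odd 0))).
by apply: eq_bigr => a _; rewrite inE; case: (P a).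
Qed.

Section LinearExtension.
Variable V : finType.
Implicit Types (f g : {set V} -> {set {set V}}) (c : {set {set V}}).

Lemma in_lin f c x :
  (x \in lin f c) = \big[addb/false]_s ((s \in c) && (x \in f s)).
Proof. by rewrite inE odd_card. Qed.

Lemma lin_comp f g c : lin g (lin f c) = lin (fun s => lin g (f s)) c.
Proof.
have andb_xorr b I (F : I -> bool) r :
    b && \big[addb/false]_(i <- r) F i = \big[addb/false]_(i <- r) (b && F i).
  exact: (big_morph (andb b) (andb_addr b) (andbF b)).
apply/setP => x; rewrite in_lin [RHS]in_lin.
under eq_bigr do rewrite in_lin andbC andb_xorr.
rewrite exchange_big /=; apply: eq_bigr => s _.
rewrite in_lin andb_xorr; apply: eq_bigr => t _.
by case: (x \in g t); case: (s \in c); case: (t \in f s).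
Qed.

Lemma eq_in_lin f g c : {in c, f =1 g} -> lin f c = lin g c.
Proof.
move=> fg; apply/setP => x; rewrite !in_lin; apply: eq_bigr => s _.
by case sc: (s \in c) => //=; rewrite fg.
Qed.

Lemma lin_eq0 f c : {in c, forall s, f s = set0} -> lin f c = set0.
Proof.
move=> f0; apply/setP => x; rewrite in_lin in_set0 big1 // => s _.
by case sc: (s \in c); rewrite //= f0 ?in_set0.
Qed.

Lemma lin_set0 f : lin f set0 = set0.
Proof. by apply: lin_eq0 => s; rewrite in_set0. Qed.

Lemma lin_set1 f s : lin f [set s] = f s.
Proof.
apply/setP => x; rewrite in_lin (bigD1 s) //= inE eqxx big1 ?addbF // => t.
by rewrite inE => /negbTE ->.
Qed.

Lemma lin_eq0_setD1 f c s : lin f c = set0 -> s \in c -> f s = lin f (c :\ s).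
Proof.
move=> f0 sc; apply/setP => x; move/setP/(_ x): f0.
rewrite !in_lin in_set0 (bigD1 s) //= sc /=.
have -> : \big[addb/false]_t ((t \in c :\ s) && (x \in f t))
         = \big[addb/false]_(t | t != s) ((t \in c) && (x \in f t)).
  by rewrite [RHS]big_mkcond; apply: eq_bigr => t _; rewrite in_setD1; case: eqP.
by case: (x \in f s); case: (\big[_/_]_(_ | _) _).
Qed.

Lemma lin_subset f c (A : {set {set V}}) :
  {in c, forall s, f s \subset A} -> lin f c \subset A.
Proof.
move=> fA; apply/subsetP => x; rewrite inE.
case: (set_0Vmem [set s in c | x \in f s]) => [->|[s]]; first by rewrite cards0.
by rewrite inE => /andP[sc /(subsetP (fA s sc))].
Qed.

Lemma lin_comp3 f g h c :
  lin h (lin g (lin f c)) = lin (fun s => lin h (lin g (f s))) c.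
Proof. by rewrite !lin_comp; apply: eq_in_lin => s _; rewrite lin_comp. Qed.

End LinearExtension.

(* [r] stands for the (co)reference map and [D] for the (co)boundary. *)
Section ProjectedSquare.
Variables (V : finType) (r D : {set V} -> {set {set V}}).

Lemma lin_proj_chain (X : {set {set V}}) :
    {in X, forall t, lin r (lin D (r t)) = lin r (D t)} ->
  lin r (lin D (lin r X)) = lin r (lin D X).
Proof. by move=> rDr; rewrite lin_comp3 (eq_in_lin rDr) lin_comp. Qed.

Lemma lin_proj_pair a s :
    lin r (D a) = set0 -> lin D (D a) = set0 -> s \in D a ->
    {in D a :\ s, forall t, lin r (lin D (r t)) = lin r (D t)} ->
  lin r (lin D (r s)) = lin r (D s).
Proof.
move=> rDa0 DDa0 sDa rDr.
by rewrite (lin_eq0_setD1 rDa0 sDa) (lin_proj_chain rDr) -(lin_eq0_setD1 DDa0 sDa).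
Qed.

Lemma lin_proj_square_eq0 (K c : {set {set V}}) :
    {in K, forall s, lin r (lin D (r s)) = lin r (D s)} ->
    {in K, forall s, lin D (D s) = set0} -> (forall s, D s \subset K) ->
    c \subset K ->
  lin r (lin D (lin r (lin D c))) = set0.
Proof.
move=> rDr DD0 DK cK.
have DcK : lin D c \subset K by apply: lin_subset.
rewrite lin_proj_chain => [|t /(subsetP DcK)/rDr //].
rewrite [lin D (lin D c)]lin_comp (lin_eq0 (fun s sc => DD0 s (subsetP cK s sc))).
exact: lin_set0.
Qed.

End ProjectedSquare.

Section BoundarySquare.
Variable V : finType.
Implicit Types (a b s t x : {set V}) (K : {set {set V}}).

Lemma card_strictly_between a b : a \subset b -> #|b| = #|a|.+2 ->
  #|[set t : {set V} | a \proper t & t \proper b]| = 2.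
Proof.
move=> ab cb.
have -> : [set t : {set V} | a \proper t & t \proper b] = [set v |: a | v in b :\: a].
  apply/setP => t; rewrite inE; apply/andP/imsetP => [[a_t t_b]|[v]].
    have [_ [v vt va]] := properP a_t.
    exists v; first by rewrite inE va (subsetP (proper_sub t_b)).
    apply/eqP; rewrite eq_sym eqEcard subUset sub1set vt (proper_sub a_t) cardsU1 va /=.
    by move: (proper_card a_t) (proper_card t_b); lia.
  rewrite inE => /andP[va vb] ->.
  by rewrite !properEcard subsetUr subUset sub1set vb ab cardsU1 va cb; lia.
rewrite card_in_imset => [|v w]; first by rewrite cardsDS // cb; lia.
rewrite !inE => /andP[va _] /andP[wa _] vaE.
have : v \in w |: a by rewrite -vaE setU11.
by rewrite in_setU1 (negbTE va) orbF => /eqP.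
Qed.

Lemma even_card_bdry_chains K a b : complex K -> b \in K ->
  ~~ odd #|[set t in bdry K b | a \in bdry K t]|.
Proof.
move=> [_ K_closed] bK.
case: (set_0Vmem [set t in bdry K b | a \in bdry K t]) => [->|[t0]].
  by rewrite cards0.
rewrite !inE => /andP[/and3P[_ t0_b /eqP ct0] /and3P[aK a_t0 /eqP ca]].
have cb : #|b| = #|a|.+2 by move: (proper_card t0_b) (proper_card a_t0); lia.
suff -> : [set t in bdry K b | a \in bdry K t]
          = [set t : {set V} | a \proper t & t \proper b].
  by rewrite card_strictly_between // proper_sub // (proper_trans a_t0 t0_b).
apply/setP => t; rewrite !inE; apply/idP/idP.
  by case/andP=> /and3P[_ -> _] /and3P[_ -> _].
case/andP=> a_t t_b; have tK : t \in K.
  apply: (K_closed b _ bK (proper_sub t_b)).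
  by rewrite -proper0 (sub_proper_trans (sub0set a) a_t).
rewrite a_t t_b tK aK /=; move: (proper_card a_t) (proper_card t_b) => ? ?.
by apply/andP; split; apply/eqP; lia.
Qed.

Lemma bdry_bdry K s : complex K -> s \in K -> lin (bdry K) (bdry K s) = set0.
Proof.
by move=> HK sK; apply/setP => x; rewrite inE in_set0; apply/negbTE/even_card_bdry_chains.
Qed.

Lemma mem_cobdry K s t : s \in K -> t \in K -> (t \in cobdry K s) = (s \in bdry K t).
Proof.
move=> sK tK; rewrite !inE sK tK /=; case: (boolP (s \proper t)) => //= /proper_card st.
by apply/eqP/eqP; lia.
Qed.

Lemma cobdry_cobdry K s : complex K -> s \in K -> lin (cobdry K) (cobdry K s) = set0.
Proof.
move=> HK sK; apply/setP => x; rewrite inE in_set0; apply/negbTE.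
case: (boolP (x \in K)) => xK; last first.
  rewrite (_ : [set _ in _ | _] = set0) ?cards0 //.
  by apply/setP => t; rewrite !inE (negbTE xK) /= andbF.
rewrite (_ : [set t in cobdry K s | x \in cobdry K t]
             = [set t in bdry K x | s \in bdry K t]).
  exact: even_card_bdry_chains.
apply/setP => t; rewrite [LHS]in_set [RHS]in_set.
have [tK|tK] := boolP (t \in K); first by rewrite -!mem_cobdry // andbC.
by rewrite !inE (negbTE tK).
Qed.

End BoundarySquare.

Section Expansion.
Variable V : finType.
Implicit Types (sg tau : {set V}) (K L M : {set {set V}}).

Lemma free_pair_card L sg tau : complex L -> free_pair L sg tau -> #|tau| = #|sg|.+1.
Proof.
move=> [_ L_closed] [sg_tau _ tauL free].
have [sg_sub [v v_tau v_sg]] := properP sg_tau.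
have vsgL : v |: sg \in L.
  apply: (L_closed tau) => //; first by rewrite subUset sub1set v_tau sg_sub.
  by apply/set0Pn; exists v; rewrite setU11.
case: (free _ vsgL (subsetUr _ _)) => [vsgE|<-]; last by rewrite cardsU1 v_sg.
by move: v_sg; rewrite -vsgE setU11.
Qed.

Lemma free_pair_bdry K L sg tau :
  complex L -> L \subset K -> free_pair L sg tau -> sg \in bdry K tau.
Proof.
move=> Lcx LK fp; have [sg_tau sgL _ _] := fp.
by rewrite inE (subsetP LK _ sgL) sg_tau (free_pair_card Lcx fp) /=.
Qed.

Lemma free_pair_cobdry K L sg tau :
  complex L -> L \subset K -> free_pair L sg tau -> tau \in cobdry K sg.
Proof.
move=> Lcx LK fp; have [sg_tau _ tauL _] := fp.
by rewrite inE (subsetP LK _ tauL) sg_tau (free_pair_card Lcx fp) /=.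
Qed.

Lemma expansion_bdry K L M sg tau : complex K -> complex M ->
  elem_expansion L M sg tau -> {subset bdry K tau :\ sg <= L}.
Proof.
move=> [K0 _] [_ M_closed] [[_ _ tauM _] ->] t.
rewrite !inE => /andP[t_sg /and3P[tK t_tau _]].
rewrite negb_or t_sg (proper_neq t_tau) (M_closed tau) ?(proper_sub t_tau) //.
by apply: contraNneq K0 => <-.
Qed.

Lemma expansion_cobdry K L M sg tau :
  elem_expansion L M sg tau -> {subset cobdry K sg :\ tau <= K :\: M}.
Proof.
move=> [[_ _ _ free] _] t; rewrite !inE => /andP[t_tau /and3P[tK sg_t _]].
rewrite tK andbT; apply/negP => tM.
case: (free t tM (proper_sub sg_t)) => tE; first by rewrite tE properxx in sg_t.
by rewrite tE eqxx in t_tau.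
Qed.

End Expansion.

Section MorseSequence.
Variables (V : finType) (K : {set {set V}}) (W : seq {set {set V}}).
Hypothesis HW : morse_seq K W.
Local Notation n := (size W).
Local Notation Ki i := (nth set0 W i).

Lemma morse_seq_subS i : i.+1 < n -> Ki i \subset Ki i.+1.
Proof.
case: HW => _ _ _ _ step lt_in.
by have /step[[sg [tau [_ ->]]]|[nu [_ ->]]] : 0 < i.+1 < n := lt_in;
  apply: subsetDl.
Qed.

Lemma morse_seq_last : Ki n.-1 = K.
Proof. by case: HW => _ _ <- _ _; rewrite nth_last. Qed.

Lemma morse_seq_mono i j : i <= j -> j < n -> Ki i \subset Ki j.
Proof.
elim: j => [|j IH]; first by rewrite leqn0 => /eqP->.
rewrite leq_eqVlt => /orP[/eqP-> //|le_ij lt_jn].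
by apply: subset_trans (IH le_ij (ltnW lt_jn)) (morse_seq_subS lt_jn).
Qed.

Lemma morse_seq_sub i : i < n -> Ki i \subset K.
Proof.
move=> lt_in; rewrite -morse_seq_last; apply: morse_seq_mono; first by lia.
by case: HW => n0 *; lia.
Qed.

Lemma morse_seq_new i s : i.+1 < n -> s \in Ki i.+1 -> s \notin Ki i ->
  critical W s \/
  exists sg tau, [/\ regular_pair W sg tau, elem_expansion (Ki i) (Ki i.+1) sg tau
                   & s = sg \/ s = tau].
Proof.
case: HW => _ _ _ _ step lt_in s_new s_old.
have lt_i1n : 0 < i.+1 < n by rewrite lt_in.
have /step[[sg [tau [exp KiE]]]|[nu [fill KiE]]] := lt_i1n; move: s_old; rewrite /= KiE.
  rewrite !inE s_new andbT negbK => /orP[]/eqP sE.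
    by right; exists sg, tau; split => //; [exists i.+1 | left].
  by right; exists sg, tau; split => //; [exists i.+1 | right].
by rewrite !inE s_new andbT negbK => /eqP ->; left; exists i.+1.
Qed.

Lemma morse_seq_ind (P : {set V} -> Prop) :
    (forall nu, critical W nu -> P nu) ->
    (forall L M sg tau, complex M -> M \subset K -> regular_pair W sg tau ->
       elem_expansion L M sg tau -> {in L, forall s, P s} -> P sg /\ P tau) ->
  {in K, forall s, P s}.
Proof.
move=> P_crit P_pair.
suff P_Ki i : i < n -> {in Ki i, forall s, P s}.
  by rewrite -morse_seq_last; apply: P_Ki; case: HW => n0 *; lia.
elim: i => [_ s|i IH lt_in s s_new]; first by case: HW => _ -> _ _ _; rewrite in_set0.
have [s_old|s_old] := boolP (s \in Ki i); first exact: IH (ltnW lt_in) _ s_old.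
case: (morse_seq_new lt_in s_new s_old) => [/P_crit //|[sg [tau [reg exp sE]]]].
case: HW => _ _ _ Kcx _.
have [] := P_pair _ _ sg tau (Kcx _ lt_in) (morse_seq_sub lt_in) reg exp (IH (ltnW lt_in)).
by case: sE => ->.
Qed.

Lemma morse_seq_ind_down (P : {set V} -> Prop) :
    (forall nu, critical W nu -> P nu) ->
    (forall L M sg tau, complex M -> M \subset K -> regular_pair W sg tau ->
       elem_expansion L M sg tau -> {in K :\: M, forall s, P s} -> P sg /\ P tau) ->
  {in K, forall s, P s}.
Proof.
move=> P_crit P_pair.
suff P_Ki j : j < n -> {in K :\: Ki (n.-1 - j), forall s, P s}.
  move=> s sK; apply: (P_Ki n.-1); first by case: HW => n0 *; lia.
  by case: HW => _ W0 _ _ _; rewrite subnn W0 setD0.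
elim: j => [_ s|j IH lt_jn s]; first by rewrite subn0 morse_seq_last setDv inE.
have [lt_in iE] : (n.-1 - j.+1).+1 < n /\ n.-1 - j = (n.-1 - j.+1).+1 by lia.
move: IH; rewrite iE; set i := n.-1 - j.+1 => IH.
rewrite inE => /andP[s_old sK].
have [s_new|s_new] := boolP (s \in Ki i.+1); last by apply: IH; rewrite ?inE ?s_new //; lia.
case: (morse_seq_new lt_in s_new s_old) => [/P_crit //|[sg [tau [reg exp sE]]]].
case: HW => _ _ _ Kcx _.
have [] := P_pair _ _ sg tau (Kcx _ lt_in) (morse_seq_sub lt_in) reg exp (IH (ltnW lt_jn)).
by case: sE => ->.
Qed.

End MorseSequence.

Section ReferenceMaps.
Variables (V : finType) (K : {set {set V}}) (W : seq {set {set V}}).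
Hypotheses (HK : complex K) (HW : morse_seq K W).

Lemma ref_bdry_ref ref : is_reference_map K W ref ->
  {in K, forall s, lin ref (lin (bdry K) (ref s)) = lin ref (bdry K s)}.
Proof.
move=> [_ ref_crit ref_reg]; apply: (morse_seq_ind HW).
  by move=> nu /ref_crit ->; rewrite lin_set1.
move=> L M sg tau Mcx MK reg exp IH.
have [ref_tau ref_btau] := ref_reg tau (ex_intro _ sg reg).
split; last by rewrite ref_tau !lin_set0 ref_btau.
have [[_ _ tauM _] _] := exp.
apply: (lin_proj_pair ref_btau); first exact: bdry_bdry HK (subsetP MK _ tauM).
  by case: exp => fp _; apply: free_pair_bdry fp.
by move=> t /(expansion_bdry HK Mcx exp)/IH.
Qed.

Lemma coref_cobdry_coref coref : is_coreference_map K W coref ->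
  {in K, forall s, lin coref (lin (cobdry K) (coref s)) = lin coref (cobdry K s)}.
Proof.
move=> [_ coref_crit coref_reg]; apply: (morse_seq_ind_down HW).
  by move=> nu /coref_crit ->; rewrite lin_set1.
move=> L M sg tau Mcx MK reg exp IH.
have [coref_sg coref_dsg] := coref_reg sg (ex_intro _ tau reg).
split; first by rewrite coref_sg !lin_set0 coref_dsg.
have [[_ sgM _ _] _] := exp.
apply: (lin_proj_pair coref_dsg); first exact: cobdry_cobdry HK (subsetP MK _ sgM).
  by case: exp => fp _; apply: free_pair_cobdry fp.
by move=> t /(expansion_cobdry exp)/IH.
Qed.

End ReferenceMaps.

Theorem proposition7 (V : finType) (K : {set {set V}}) (W : seq {set {set V}})
    (ref coref : {set V} -> {set {set V}}) :
  complex K -> morse_seq K W ->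
  is_reference_map K W ref -> is_coreference_map K W coref ->
  forall p : nat,
    (forall c, hatW K W p.+1 c -> hat_bdry K ref (hat_bdry K ref c) = set0) /\
    (forall c, hatW K W p c -> hat_cobdry K coref (hat_cobdry K coref c) = set0).
Proof.
move=> HK HW ref_map coref_map p.
have chain_sub q c : hatW K W q c -> c \subset K.
  by move=> c_crit; apply/subsetP => x /c_crit[].
split=> c /chain_sub cK; apply: (lin_proj_square_eq0 _ _ _ cK).
- by move=> s; apply: (ref_bdry_ref HK HW ref_map).
- by move=> s; apply: bdry_bdry HK.
- by move=> s; apply/subsetP => t /setIdP[].
- by move=> s; apply: (coref_cobdry_coref HK HW coref_map).
- by move=> s; apply: cobdry_cobdry HK.
- by move=> s; apply/subsetP => t /setIdP[].
Qed.
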